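(* Every semifilter $\mathcal{S}$ (viewed as a subspace of $2^\omega$) is homogeneous.
   Context: A semifilter (on $\omega$) is a collection $\mathcal{S}\subseteq\mathcal{P}(\omega)$ such that $\varnothing\notin\mathcal{S}$, $\omega\in\mathcal{S}$, $\mathcal{S}$ is closed under finite modifications (if $x\in\mathcal{S}$ and $y\subseteq\omega$ with $(x\setminus y)\cup(y\setminus x)$ finite then $y\in\mathcal{S}$), and $\mathcal{S}$ is upward-closed. Subsets of $\mathcal{P}(\omega)$ are identified via characteristic functions with subspaces of $2^\omega$. A space $X$ is homogeneous if for all $x,y\in X$ there is a homeomorphism $h:X\to X$ with $h(x)=y$. *)

(* Subsets of omega are identified with their characteristic
   functions nat -> bool (points of the Cantor space 2^omega); a collection
   of subsets of omega is a predicate on (nat -> bool). *)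
From Stdlib Require Import Arith.

Definition cantor := nat -> bool.

Definition agree (n : nat) (x y : cantor) : Prop :=
  forall i, i < n -> x i = y i.

(* U is (relatively) open in the subspace S of 2^omega with the product
   topology: U ∩ S is a union of traces on S of basic open sets. *)
Definition rel_open (S U : cantor -> Prop) : Prop :=
  forall x, S x -> U x -> exists n, forall z, S z -> agree n x z -> U z.

Definition continuous_on (S T : cantor -> Prop) (f : cantor -> cantor) : Prop :=
  (forall x, S x -> T (f x)) /\
  (forall U, rel_open T U -> rel_open S (fun x => U (f x))).

Definition homeomorphism (S : cantor -> Prop) (f g : cantor -> cantor) : Prop :=
  continuous_on S S f /\ continuous_on S S g /\
  (forall x, S x -> g (f x) = x) /\ (forall y, S y -> f (g y) = y).

Definition homogeneous (S : cantor -> Prop) : Prop :=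
  forall x y, S x -> S y -> exists f g, homeomorphism S f g /\ f x = y.

Definition finite_mod (x y : cantor) : Prop :=
  exists N, forall i, N <= i -> x i = y i.

Definition semifilter (S : cantor -> Prop) : Prop :=
  ~ S (fun _ => false) /\
  S (fun _ => true) /\
  (forall x y, S x -> finite_mod x y -> S y) /\
  (forall x y, S x -> (forall i, x i = true -> y i = true) -> S y).

From Stdlib Require Import Arith Lia Bool Classical FunctionalExtensionality.

(* Given x, y in S, send z to z + (x + y) restricted to the longest prefix on
   which z agrees with x, together with the first position where they differ
   (addition in (Z/2)^omega).  Then x goes to y, every other z is moved only on
   finitely many coordinates, so S is preserved as soon as it is closed under
   finite modifications; the first n output bits depend only on the first n
   input bits, and the same recipe with x and y exchanged is the inverse map. *)

Fixpoint agreeb (n : nat) (x z : cantor) : bool :=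
  match n with
  | 0 => true
  | S k => agreeb k x z && Bool.eqb (x k) (z k)
  end.

Lemma agreebP n x z : reflect (agree n x z) (agreeb n x z).
Proof.
  apply iff_reflect; induction n as [|n IH]; simpl.
  - split; [reflexivity | intros _ i Hi; lia].
  - rewrite andb_true_iff, eqb_true_iff, <- IH. split.
    + intros H; split; [intros i Hi|]; apply H; lia.
    + intros [H Hn] i Hi.
      destruct (Nat.eq_dec i n) as [->|]; [exact Hn | apply H; lia].
Qed.

Lemma agree_le m n x z : m <= n -> agree n x z -> agree m x z.
Proof. intros Hmn H i Hi; apply H; lia. Qed.

Lemma agreeb_agree_r n x z w : agree n z w -> agreeb n x z = agreeb n x w.
Proof.
  intros Hzw.
  destruct (agreebP n x z) as [H|H]; destruct (agreebP n x w) as [H'|H']; auto.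
  - exfalso; apply H'; intros i Hi; rewrite H, Hzw; auto.
  - exfalso; apply H; intros i Hi; rewrite H', Hzw; auto.
Qed.

Definition transport (x y z : cantor) : cantor := fun i =>
  if agreeb i x z then xorb (z i) (xorb (x i) (y i)) else z i.

Lemma agreeb_transport x y z n : agreeb n y (transport x y z) = agreeb n x z.
Proof.
  induction n as [|n IH]; simpl; [reflexivity|].
  rewrite IH; unfold transport.
  destruct (agreeb n x z); simpl; [|reflexivity].
  destruct (x n), (y n), (z n); reflexivity.
Qed.

Lemma transportK x y z : transport y x (transport x y z) = z.
Proof.
  apply functional_extensionality; intro i; unfold transport at 1.
  rewrite agreeb_transport; unfold transport.
  destruct (agreeb i x z); [|reflexivity].
  destruct (x i), (y i), (z i); reflexivity.
Qed.

Lemma transport_id x y : transport x y x = y.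
Proof.
  apply functional_extensionality; intro i; unfold transport.
  destruct (agreebP i x x) as [_|H]; [| exfalso; apply H; intros j _; reflexivity].
  destruct (x i), (y i); reflexivity.
Qed.

Lemma transport_finite_mod x y z n :
  x n <> z n -> finite_mod z (transport x y z).
Proof.
  intros Hn; exists (S n); intros i Hi; unfold transport.
  destruct (agreebP i x z) as [H|]; [exfalso; apply Hn, H; lia | reflexivity].
Qed.

Lemma transport_agree x y n z w :
  agree n z w -> agree n (transport x y z) (transport x y w).
Proof.
  intros Hzw i Hi; unfold transport.
  rewrite (agreeb_agree_r i x z w) by (apply (agree_le i n); auto; lia).
  rewrite (Hzw i Hi); reflexivity.
Qed.

Lemma continuous_on_of_agree (S : cantor -> Prop) (f : cantor -> cantor) :
  (forall z, S z -> S (f z)) ->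
  (forall n z w, agree n z w -> agree n (f z) (f w)) ->
  continuous_on S S f.
Proof.
  intros HSf Hf; split; [exact HSf|].
  intros U HU z Sz Uz.
  destruct (HU (f z) (HSf z Sz) Uz) as [n Hn].
  exists n; intros w Sw Hzw; apply Hn; auto.
Qed.

Section FiniteModificationClosed.

Variable S : cantor -> Prop.
Hypothesis S_finite_mod : forall x y, S x -> finite_mod x y -> S y.

Lemma transport_in x y z : S y -> S z -> S (transport x y z).
Proof.
  intros Sy Sz.
  destruct (classic (forall n, x n = z n)) as [Hxz|Hxz].
  - replace z with x by (apply functional_extensionality; exact Hxz).
    rewrite transport_id; exact Sy.
  - apply not_all_ex_not in Hxz as [n Hn].
    exact (S_finite_mod z _ Sz (transport_finite_mod x y z n Hn)).
Qed.

Lemma transport_homeomorphism x y :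
  S x -> S y -> homeomorphism S (transport x y) (transport y x).
Proof.
  intros Sx Sy; repeat split; try (intros; apply transportK);
    apply continuous_on_of_agree; auto using transport_in, transport_agree.
Qed.

End FiniteModificationClosed.

Theorem corollary4p3 (S : cantor -> Prop) :
  semifilter S -> homogeneous S.
Proof.
  intros [_ [_ [S_finite_mod _]]] x y Sx Sy.
  exists (transport x y), (transport y x); split.
  - exact (transport_homeomorphism S S_finite_mod x y Sx Sy).
  - apply transport_id.
Qed.
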